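(* Let $G$ be a concurrent game structure, $T\subseteq S$, with all states of $T\cup W_2$ absorbing. Let $v$ be a valuation such that $\mathrm{Pre}_1(v)\ge v$ and $v(s)=0$ for all $s\in W_2$. Let $\xi_1$ be a player-1 selector with $\mathrm{Pre}_{1:\xi_1}(v)=\mathrm{Pre}_1(v)$. If $\xi_1$ is proper, then for all player-2 strategies $\pi_2$ we have $\Pr^{\overline{\xi}_1,\pi_2}(\mathrm{Reach}(T))\ge v$, i.e. $\Pr_s^{\overline{\xi}_1,\pi_2}(\mathrm{Reach}(T))\ge v(s)$ for all $s\in S$.
   Context: Concurrent game structure $G=(S,M,\Gamma_1,\Gamma_2,\delta)$: finite states, finite moves, nonempty move sets $\Gamma_i(s)$, transition probabilities $\delta(s,a_1,a_2)\in\mathrm{Distr}(S)$ (simultaneous independent moves). Absorbing state: every move pair leads back to it with probability 1. Selectors assign to each state a distribution on available moves; $\overline{\xi}$ is the memoryless strategy playing $\xi$. $\Pr_s^{\pi_1,\pi_2}$: induced measure on plays from $s$. $\mathrm{Reach}(X)$: plays visiting $X$. $W_2=\{s:\sup_{\pi_1}\inf_{\pi_2}\Pr_s^{\pi_1,\pi_2}(\mathrm{Reach}(T))=0\}$. A valuation is $v:S\to[0,1]$, compared pointwise. $\mathrm{Pre}_{\xi_1,\xi_2}(v)(s)=\sum_{a,b}\sum_tv(t)\delta(s,a,b)(t)\xi_1(s)(a)\xi_2(s)(b)$, $\mathrm{Pre}_{1:\xi_1}(v)(s)=\inf_{\xi_2}\mathrm{Pre}_{\xi_1,\xi_2}(v)(s)$,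 $\mathrm{Pre}_1(v)(s)=\sup_{\xi_1}\mathrm{Pre}_{1:\xi_1}(v)(s)$. A player-1 strategy $\pi_1$ is proper if for every player-2 strategy $\pi_2$ and all $s\in S\setminus(T\cup W_2)$, $\Pr_s^{\pi_1,\pi_2}(\mathrm{Reach}(T\cup W_2))=1$; a selector is proper if its memoryless strategy is. *)

From HB Require Import structures.
From mathcomp Require Import all_boot all_order all_algebra.
From mathcomp Require Import boolp classical_sets reals.
Set Implicit Arguments. Unset Strict Implicit. Unset Printing Implicit Defensive.
Import Order.TTheory GRing.Theory Num.Theory.
Local Open Scope ring_scope.

Section ConcurrentGames.
Variables (R : realType) (S M : finType).

Definition is_distr (A : {set M}) (d : M -> R) : Prop :=
  [/\ forall a, 0 <= d a, \sum_a d a = 1 & forall a, a \notin A -> d a = 0].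

Record cgs := CGS {
  mov1 : S -> {set M};
  mov2 : S -> {set M};
  trans : S -> M -> M -> S -> R;
  mov1_nonempty : forall s, mov1 s != finset.set0;
  mov2_nonempty : forall s, mov2 s != finset.set0;
  trans_ge0 : forall s a b t, 0 <= trans s a b t;
  trans_sum1 : forall s a b, \sum_t trans s a b t = 1 }.

Variable G : cgs.

(* history-dependent randomized strategies: (past states, current state) -> distr *)
Definition strategy := seq S -> S -> M -> R.
Definition is_strategy1 (pi : strategy) := forall h s, is_distr (mov1 G s) (pi h s).
Definition is_strategy2 (pi : strategy) := forall h s, is_distr (mov2 G s) (pi h s).

Definition selector := S -> M -> R.
Definition is_selector1 (xi : selector) := forall s, is_distr (mov1 G s) (xi s).
Definition is_selector2 (xi : selector) := forall s, is_distr (mov2 G s) (xi s).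
Definition memoryless (xi : selector) : strategy := fun _ s => xi s.

Fixpoint reach_within (pi1 pi2 : strategy) (X : {set S}) (n : nat)
    (h : seq S) (s : S) : R :=
  if s \in X then 1 else
  match n with
  | 0 => 0
  | n'.+1 => \sum_a \sum_b \sum_t
       pi1 h s a * pi2 h s b * trans G s a b t *
       reach_within pi1 pi2 X n' (rcons h s) t
  end.

(* Pr_s^{pi1,pi2}(Reach X) = sup_n Pr(visit X within n steps)
   (continuity of the induced measure from below) *)
Definition prob_reach (pi1 pi2 : strategy) (X : {set S}) (s : S) : R :=
  sup [set r | exists n, r = reach_within pi1 pi2 X n [::] s].

Definition W2 (T : {set S}) : {set S} :=
  [set s | `[< sup [set r | exists pi1, is_strategy1 pi1 /\
                 r = inf [set q | exists pi2, is_strategy2 pi2 /\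
                          q = prob_reach pi1 pi2 T s]] = 0 >]].

Definition absorbing (s : S) : Prop :=
  forall a b, a \in mov1 G s -> b \in mov2 G s -> trans G s a b s = 1.

Definition valuation (v : S -> R) : Prop := forall s, 0 <= v s <= 1.

Definition Pre12 (xi1 xi2 : selector) (v : S -> R) (s : S) : R :=
  \sum_a \sum_b \sum_t v t * trans G s a b t * xi1 s a * xi2 s b.

Definition Pre1sel (xi1 : selector) (v : S -> R) (s : S) : R :=
  inf [set r | exists xi2, is_selector2 xi2 /\ r = Pre12 xi1 xi2 v s].

Definition Pre1 (v : S -> R) (s : S) : R :=
  sup [set r | exists xi1, is_selector1 xi1 /\ r = Pre1sel xi1 v s].

Definition proper1 (T : {set S}) (pi1 : strategy) : Prop :=
  forall pi2, is_strategy2 pi2 ->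
  forall s, s \notin T :|: W2 T -> prob_reach pi1 pi2 (T :|: W2 T) s = 1.

Definition proper_selector1 (T : {set S}) (xi : selector) : Prop :=
  proper1 T (memoryless xi).

End ConcurrentGames.

From HB Require Import structures.
From mathcomp Require Import all_boot all_order all_algebra.
From mathcomp Require Import boolp classical_sets reals.
From mathcomp Require Import ring lra.
Set Implicit Arguments. Unset Strict Implicit. Unset Printing Implicit Defensive.
Import Order.TTheory GRing.Theory Num.Theory.
Local Open Scope ring_scope.

(* Put X := T :|: W2 T.  Since v <= Pre1 v = Pre_{1:xi1} v, the valuation v
   increases in expectation along every step of a play taken outside X under
   xi1, whatever player 2 does.  As v <= 1, and v = 0 on X minus T, induction
   on n gives v s <= Pr(reach T within n) + (1 - Pr(reach X within n)).
   Properness makes Pr(reach X within n) tend to 1, so in the limit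
   v s <= Pr(Reach T). *)

Lemma le_sup_defect (R : realType) (c : R) (f g : nat -> R) :
  has_ubound [set r | exists n, r = f n] ->
  sup [set r | exists n, r = g n] = 1 ->
  (forall n, c <= f n + (1 - g n)) ->
  c <= sup [set r | exists n, r = f n].
Proof.
move=> ubf supg1 cle; rewrite leNgt; apply/negP => supf_lt.
have hsg : has_sup [set r | exists n, r = g n].
  by apply: contrapT => /sup_out; rewrite supg1 => /eqP; rewrite oner_eq0.
have eps_gt0 : 0 < c - sup [set r | exists n, r = f n] by rewrite subr_gt0.
have [_ [n ->]] := sup_adherent eps_gt0 hsg.
have fn_le : f n <= sup [set r | exists n, r = f n] by apply: ub_le_sup => //; exists n.
have := cle n; rewrite supg1; lra.
Qed.

Section ConcurrentReach.
Variables (R : realType) (S M : finType) (G : cgs R S M).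

Lemma joint_trans_ge0 (A B : {set M}) (d1 d2 : M -> R) s a b t :
  is_distr A d1 -> is_distr B d2 -> 0 <= d1 a * d2 b * trans G s a b t.
Proof.
by case=> d1_ge0 _ _ [d2_ge0 _ _]; rewrite !mulr_ge0 ?trans_ge0.
Qed.

Lemma joint_trans_sum1 (A B : {set M}) (d1 d2 : M -> R) s :
  is_distr A d1 -> is_distr B d2 ->
  \sum_a \sum_b \sum_t d1 a * d2 b * trans G s a b t = 1.
Proof.
case=> _ sum_d1 _ [_ sum_d2 _]; rewrite -sum_d1; apply: eq_bigr => a _.
transitivity (\sum_b d1 a * d2 b).
  by apply: eq_bigr => b _; rewrite -mulr_sumr trans_sum1 mulr1.
by rewrite -mulr_sumr sum_d2 mulr1.
Qed.

Lemma Pre1sel_le_Pre12 (xi1 xi2 : selector R S M) (v : S -> R) s :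
  valuation v -> is_selector1 G xi1 -> is_selector2 G xi2 ->
  Pre1sel G xi1 v s <= Pre12 G xi1 xi2 v s.
Proof.
move=> vP xi1P xi2P; apply: ge_inf; last by exists xi2.
exists 0 => _ [xi2' [xi2'P ->]].
apply: sumr_ge0 => a _; apply: sumr_ge0 => b _; apply: sumr_ge0 => t _.
have [vt_ge0 _] := andP (vP t).
have [xi1_ge0 _ _] := xi1P s; have [xi2'_ge0 _ _] := xi2'P s.
by rewrite !mulr_ge0 ?trans_ge0.
Qed.

Variables (pi1 pi2 : strategy R S M).
Hypotheses (pi1P : is_strategy1 G pi1) (pi2P : is_strategy2 G pi2).

Lemma reach_within_bounds X n h s :
  0 <= reach_within G pi1 pi2 X n h s <= 1.
Proof.
elim: n h s => [|n IH] h s /=; case: ifP => _; rewrite ?ler01 ?lexx //.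
have w_ge0 a b t := joint_trans_ge0 s a b t (pi1P h s) (pi2P h s).
apply/andP; split.
  apply: sumr_ge0 => a _; apply: sumr_ge0 => b _; apply: sumr_ge0 => t _.
  by rewrite mulr_ge0 //; case/andP: (IH (rcons h s) t).
rewrite -(joint_trans_sum1 s (pi1P h s) (pi2P h s)).
apply: ler_sum => a _; apply: ler_sum => b _; apply: ler_sum => t _.
by rewrite ler_piMr //; case/andP: (IH (rcons h s) t).
Qed.

Lemma reach_within_in (X : {set S}) n h s :
  s \in X -> reach_within G pi1 pi2 X n h s = 1.
Proof. by case: n => [|n] /= ->. Qed.

Lemma prob_reach_in (X : {set S}) s :
  s \in X -> prob_reach G pi1 pi2 X s = 1.
Proof.
move=> sX; rewrite /prob_reach -[RHS](sup1 (1 : R)); congr sup.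
apply/seteqP; split=> r /=; first by case=> n ->; rewrite reach_within_in.
by move=> ->; exists 0%N; rewrite reach_within_in.
Qed.

Lemma le_reach_within_defect (T X : {set S}) (u : S -> R) :
  (forall s, u s <= 1) ->
  (forall s, s \in X -> s \notin T -> u s <= 0) ->
  (forall h s, s \notin X -> u s <= Pre12 G (pi1 h) (pi2 h) u s) ->
  forall n h s, u s <= reach_within G pi1 pi2 T n h s +
                       (1 - reach_within G pi1 pi2 X n h s).
Proof.
move=> u_le1 u_le0 u_step.
have boundary n h s : (s \in T) || (s \in X) ->
    u s <= reach_within G pi1 pi2 T n h s + (1 - reach_within G pi1 pi2 X n h s).
  have [rT_ge0 _] := andP (reach_within_bounds T n h s).
  have [_ rX_le1] := andP (reach_within_bounds X n h s).
  have [sT _|sTn /= sX] := boolP (s \in T).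
    by rewrite reach_within_in //; have := u_le1 s; lra.
  by rewrite (reach_within_in _ _ sX); have := u_le0 s sX sTn; lra.
elim=> [|n IH] h s; have [/boundary //|] := boolP ((s \in T) || (s \in X)).
  by rewrite negb_or /= => /andP[/negbTE -> /negbTE ->]; rewrite subr0 add0r.
rewrite negb_or /= => /andP[/negbTE -> sXn]; rewrite (negbTE sXn).
apply: (le_trans (u_step h s sXn)).
set w := fun a b t => pi1 h s a * pi2 h s b * trans G s a b t.
rewrite -[in 1 - _](joint_trans_sum1 s (pi1P h s) (pi2P h s)) -/w.
rewrite -sumrB -big_split; apply: ler_sum => a _.
rewrite -sumrB -big_split; apply: ler_sum => b _.
rewrite -sumrB -big_split; apply: ler_sum => t _ /=.
rewrite (_ : _ * _ * _ * _ = w a b t * u t); last by rewrite /w; ring.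
rewrite (_ : _ + _ = w a b t * (reach_within G pi1 pi2 T n (rcons h s) t +
                     (1 - reach_within G pi1 pi2 X n (rcons h s) t))); last by rewrite /w; ring.
by rewrite ler_wpM2l ?(joint_trans_ge0 s a b t (pi1P h s) (pi2P h s)).
Qed.

End ConcurrentReach.

Theorem lemma3 (R : realType) (S M : finType) (G : cgs R S M) (T : {set S})
    (v : S -> R) (xi1 : selector R S M) :
  (forall s, s \in T :|: W2 G T -> absorbing G s) ->
  valuation v ->
  (forall s, v s <= Pre1 G v s) ->
  (forall s, s \in W2 G T -> v s = 0) ->
  is_selector1 G xi1 ->
  (forall s, Pre1sel G xi1 v s = Pre1 G v s) ->
  proper_selector1 G T xi1 ->
  forall pi2 : strategy R S M, is_strategy2 G pi2 ->
  forall s, v s <= prob_reach G (memoryless xi1) pi2 T s.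
Proof.
move=> _ vP v_le_Pre1 v_W2 xi1P Pre1_xi1 xi1_proper pi2 pi2P s.
have pi1P : is_strategy1 G (memoryless xi1) by move=> h; exact: xi1P.
pose X := T :|: W2 G T.
apply: (le_sup_defect (g := fun n => reach_within G (memoryless xi1) pi2 X n [::] s)).
- by exists 1 => _ [n ->]; case/andP: (reach_within_bounds pi1P pi2P T n [::] s).
- have [sX|sXn] := boolP (s \in X); first exact: prob_reach_in.
  exact: xi1_proper.
- move=> n; apply: (le_reach_within_defect pi1P pi2P) => [t | t tX tTn | h t _].
  + by case/andP: (vP t).
  + by rewrite v_W2 //; move: tX; rewrite inE (negbTE tTn).
  + by rewrite (le_trans (v_le_Pre1 t)) // -Pre1_xi1 (Pre1sel_le_Pre12 _ vP xi1P (pi2P h)).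
Qed.
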